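(* Let $w\in\{a,b\}^*$, $|w|=n>1$, be conjugate to a Christoffel word, and let $p=|w|_a$ (so $\gcd(p,n)=1$). Fix $1\le k\le m<n$ and an ordered partition $P_k=(p_1,\dots,p_k)$ of $m$. Let $s_0=0$, $s_\ell=p_1+\dots+p_\ell$ for $1\le\ell\le k$, and let $i_\ell$ be the least nonnegative residue of $s_\ell p$ modulo $n$. These $k+1$ residues are distinct; list them in increasing order as $0=r_0<r_1<\dots<r_k$, set $r_{k+1}=n$, and let $\pi_\ell=r_{\ell+1}-r_\ell$ for $0\le\ell\le k$, so that $\Pi=(\pi_0,\dots,\pi_k)$ is an ordered partition of $n$ into $k+1$ parts. Order the $k+1$ varieties of $\mathcal{F}_{(m,k)}$ as $\lambda_0,\dots,\lambda_k$ according to the lexicographic order of their elements (the lexicographically least element of $\lambda_{\ell}$ precedes that of $\lambda_{\ell+1}$). Then the multiplicity of $\lambda_\ell$ is $\pi_\ell$ for each $0\le\ell\le k$. (For example, for $w=aaabaab$ and $P_3=(1,2,1)$, $\Pi=(1,4,1,1)$.)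
   Context: Alphabet $\{a<b\}$ with lexicographic order. $|u|_x$ denotes the number of occurrences of the letter $x$ in $u$. For $|w|=n$ and $1\le m<n$, the multiset $\mathcal{F}_m$ of circular factors of length $m$ of $w$ is the multiset of the length-$m$ prefixes of the $n$ rotations of $w$ (equivalently, the $n$ factors of length $m$ of the prefix of length $n+m-1$ of $ww$, counted with starting positions). Given an ordered partition $P_k=(p_1,\dots,p_k)$ of $m$ (positive integers summing to $m$), $\mathcal{F}_{(m,k)}$ is the multiset of the $u\in\mathcal{F}_m$ written as $u=u_1\cdots u_k$ with $|u_i|=p_i$. The height profile of $u$ is $\langle |u_1|_b,\dots,|u_k|_b\rangle$; partitioned factors of equal height profile are of the same variety; the multiplicity of a variety is the number of elements of the multiset $\mathcal{F}_{(m,k)}$ in it. A lower Christoffel word of slope $q/p$ with $p,q\ge1$, $\gcd(p,q)=1$, $n=p+q$, is $w_0\cdots w_{n-1}$ where $w_i=a$ if $((i+1)q\bmod n)>(iq\bmod n)$ and $w_i=b$ otherwise; a Christoffel word (of length $>1$) is a lower Christoffel word or its reversal; conjugate means rotation. It is known (Theorem card) that $\mathcal{F}_{(m,k)}$ has exactly $k+1$ varieties, each forming a block of lexicographically consecutive elements. *)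

(* Words over {a < b} are encoded as seq bool with
   a := false and b := true. *)
From mathcomp Require Import all_boot.
Set Implicit Arguments. Unset Strict Implicit. Unset Printing Implicit Defensive.

Definition word := seq bool.

Definition cnt_b (u : word) : nat := count id u.
Definition cnt_a (u : word) : nat := count negb u.

Fixpoint lexle (u v : word) : bool :=
  match u, v with
  | [::], _ => true
  | _ :: _, [::] => false
  | x :: u', y :: v' => if x == y then lexle u' v' else (~~ x) && y
  end.

Definition lower_christoffel (p q : nat) : word :=
  let n := p + q in
  mkseq (fun i => ~~ ((i * q) %% n < (i.+1 * q) %% n)) n.

Definition christoffel (w : word) : Prop :=
  exists p q, [/\ 0 < p, 0 < q, coprime p q &
     (w = lower_christoffel p q \/ w = rev (lower_christoffel p q))].

Definition conjugate (u v : word) : Prop := exists r, u = rot r v.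

(* multiset (list, with multiplicity) of circular factors of length m:
   length-m prefixes of the n rotations of w *)
Definition circ_factors (w : word) (m : nat) : seq word :=
  [seq take m (rot i w) | i <- iota 0 (size w)].

Definition ordered_partition (P : seq nat) (m k : nat) : bool :=
  [&& size P == k, all (fun x => 0 < x) P & sumn P == m].

Definition height_profile (P : seq nat) (u : word) : seq nat :=
  [seq cnt_b x | x <- reshape P u].

(* F_(m,k) is circ_factors w m, each element cut according to P *)
(* the varieties (distinct height profiles occurring) *)
Definition varieties (w : word) (P : seq nat) : seq (seq nat) :=
  undup [seq height_profile P u | u <- circ_factors w (sumn P)].

Definition variety_elems (w : word) (P : seq nat) (h : seq nat) : seq word :=
  [seq u <- circ_factors w (sumn P) | height_profile P u == h].

Definition multiplicity (w : word) (P : seq nat) (h : seq nat) : nat :=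
  size (variety_elems w P h).

Definition least_elem (w : word) (P : seq nat) (h : seq nat) : word :=
  head [::] (sort lexle (variety_elems w P h)).

Definition ordered_varieties (w : word) (P : seq nat) : seq (seq nat) :=
  sort (fun h1 h2 => lexle (least_elem w P h1) (least_elem w P h2))
       (varieties w P).

Definition residues (P : seq nat) (p n : nat) : seq nat :=
  [seq (sumn (take l P) * p) %% n | l <- iota 0 (size P).+1].

Definition Pi_partition (P : seq nat) (p n : nat) : seq nat :=
  let r := rcons (sort leq (residues P p n)) n in
  [seq nth 0 r l.+1 - nth 0 r l | l <- iota 0 (size P).+1].

From mathcomp Require Import all_boot zify.
Set Implicit Arguments. Unset Strict Implicit. Unset Printing Implicit Defensive.

(* A conjugate of a Christoffel word with p letters a and q letters b, n = p + q,
   is a mechanical word: its letter j is b iff (y + j q) mod n >= p, for some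
   intercept y.  Since j |-> y + j q is a bijection mod n, its circular factors of
   length m are the length-m mechanical words with intercepts 0, ..., n-1, each
   once.  For an intercept y < n the number of b's in the prefix of length s,
   0 < s < n, is floor(s q / n) + [s p mod n <= y]; hence two intercepts give the
   same height profile iff they lie on the same side of every residue s_l p mod n.
   The varieties are therefore the intervals [r_l, r_(l+1)) between consecutive
   sorted residues, of sizes r_(l+1) - r_l, and they appear in this order because
   the factors increase lexicographically with the intercept. *)

Lemma mkseqD T (f : nat -> T) a b :
  mkseq f (a + b) = mkseq f a ++ mkseq (fun j => f (a + j)) b.
Proof.
rewrite /mkseq iotaD map_cat add0n; congr (_ ++ _).
by rewrite -[a in iota a]addn0 iotaDl -map_comp.
Qed.

Lemma nth_rot_mod T x0 (s : seq T) r j : r <= size s -> j < size s ->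
  nth x0 (rot r s) j = nth x0 s ((r + j) %% size s).
Proof.
move=> r_le j_lt; rewrite /rot nth_cat size_drop.
case: (ltnP j (size s - r)) => j_cmp.
  by rewrite nth_drop modn_small //; lia.
rewrite nth_take; last by lia.
have -> : r + j = size s + (j - (size s - r)) by lia.
by rewrite modnDl modn_small //; lia.
Qed.

Lemma eq_modn_lt2 v z n : v = z %[mod n] -> v < n + n -> z < n -> v = z \/ v = n + z.
Proof.
move=> eq_vz v_lt z_lt; case: (ltnP v n) => v_cmp.
  by left; move: eq_vz; rewrite !modn_small.
right; move: eq_vz; have -> : v = n + (v - n) by lia.
rewrite modnDl !modn_small //; lia.
Qed.

Lemma mulnr_mod_inj x n a b : coprime x n -> a < n -> b < n ->
  a * x = b * x %[mod n] -> a = b.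
Proof.
move=> coprime_xn a_lt b_lt.
wlog le_ab : a b a_lt b_lt / a <= b.
  move=> sym; case: (leqP a b) => [le_ab|lt_ba]; first exact: sym.
  by move=> eq_ab; symmetry; apply: sym => //; exact: ltnW.
move=> /eqP; rewrite eq_sym eqn_mod_dvd; last exact: leq_mul.
rewrite -mulnBl Gauss_dvdl; last by rewrite coprime_sym.
case: (posnP (b - a)) => [|ba_gt0]; first lia.
by move/(dvdn_leq ba_gt0); lia.
Qed.

Lemma perm_iota_affine_mod n q y : coprime q n ->
  perm_eq [seq (y + i * q) %% n | i <- iota 0 n] (iota 0 n).
Proof.
move=> coprime_qn.
have inj : {in iota 0 n &, injective (fun i => (y + i * q) %% n)}.
  move=> a b; rewrite !mem_iota /= => a_lt b_lt /eqP.
  by rewrite eqn_modDl => /eqP /(mulnr_mod_inj coprime_qn a_lt b_lt).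
have uniq_s : uniq [seq (y + i * q) %% n | i <- iota 0 n].
  by rewrite map_inj_in_uniq ?iota_uniq.
apply: uniq_perm => //; first exact: iota_uniq.
apply: (uniq_min_size uniq_s _ _).2; last by rewrite size_map.
move=> x /mapP[i]; rewrite mem_iota => /andP[_ i_lt] ->.
by rewrite mem_iota /= ltn_pmod //; lia.
Qed.

Lemma lexle_refl : reflexive lexle.
Proof. by elim=> //= x u IH; rewrite eqxx. Qed.

Lemma lexle_trans : transitive lexle.
Proof.
move=> v u w; elim: u v w => [|x u IH] [|y v] [|z w] //=.
by case: x; case: y; case: z => //=; apply: IH.
Qed.

Lemma lexle_antisym : antisymmetric lexle.
Proof.
move=> u v; elim: u v => [|x u IH] [|y v] //=.
by case: x; case: y => //= /IH ->.
Qed.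

Lemma lexle_total : total lexle.
Proof.
move=> u v; elim: u v => [|x u IH] [|y v] //=; rewrite eq_sym.
by case: (y =P x) => // nxy; case: x y nxy => [] [].
Qed.

Lemma head_sort_lexle (V : seq word) x :
  x \in V -> (forall u, u \in V -> lexle x u) -> head [::] (sort lexle V) = x.
Proof.
move=> xV x_min; have := sort_sorted lexle_total V.
case E: (sort lexle V) => [|z s] /= sorted_zs.
  by move: xV; rewrite -(mem_sort lexle) E.
have zV : z \in V by rewrite -(mem_sort lexle) E mem_head.
apply: lexle_antisym; rewrite x_min // andbT.
move: xV; rewrite -(mem_sort lexle) E inE => /predU1P[<-|xs]; first exact: lexle_refl.
by have /allP := order_path_min lexle_trans sorted_zs; apply.
Qed.

Lemma height_profile_prefix (P : seq nat) (u : word) :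
  height_profile P u =
  [seq cnt_b (take (sumn (take l.+1 P)) u) - cnt_b (take (sumn (take l P)) u)
     | l <- iota 0 (size P)].
Proof.
elim: P u => [|x P IH] u //=; rewrite /height_profile /= in IH *.
rewrite IH; congr (_ :: _); first by rewrite !take0 /cnt_b /= addn0 subn0.
rewrite -[1]/(1 + 0) iotaDl -map_comp; apply: eq_map => l /=.
by rewrite !takeD /cnt_b !count_cat subnDl.
Qed.

Lemma eq_map_diffs (a b : nat -> nat) k :
  (forall l, a l <= a l.+1) -> (forall l, b l <= b l.+1) -> a 0 = b 0 ->
  ([seq a l.+1 - a l | l <- iota 0 k] == [seq b l.+1 - b l | l <- iota 0 k])
    = all (fun l => a l == b l) (iota 0 k.+1).
Proof.
move=> a_mono b_mono ab0; elim: k => [|k IH]; first by rewrite /= ab0 eqxx andbT eqxx.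
rewrite -[in LHS](addn1 k) iotaD !map_cat eqseq_cat ?size_map ?size_iota // IH.
rewrite -(addn1 k.+1) iotaD all_cat.
case: (boolP (all _ (iota 0 k.+1))) => // /allP abk.
have /eqP {}abk : a k == b k by apply: abk; rewrite mem_iota leqnn.
rewrite /= eqseq_cons eqxx !andbT !add0n.
have [ha hb] := (a_mono k, b_mono k).
by apply/eqP/eqP; lia.
Qed.

Lemma sumn_take_leq (s : seq nat) l : sumn (take l s) <= sumn s.
Proof. by rewrite -{2}(cat_take_drop l s) sumn_cat leq_addr. Qed.

Lemma leq_sumn_take (s : seq nat) l l' : l <= l' -> sumn (take l s) <= sumn (take l' s).
Proof. by move=> ll'; rewrite -(subnKC ll') takeD sumn_cat leq_addr. Qed.

Lemma sumn_take_gt0 (s : seq nat) l :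
  all (fun x => 0 < x) s -> 0 < l <= size s -> 0 < sumn (take l s).
Proof. by case: s l => [|x s] [|l] //= /andP[x_gt0 _] _; exact: ltn_addr. Qed.

Lemma sumn_take_ltn (s : seq nat) l l' :
  all (fun x => 0 < x) s -> l < l' <= size s -> sumn (take l s) < sumn (take l' s).
Proof.
move=> s_gt0 /andP[ll' l's].
rewrite -(subnKC (ltnW ll')) takeD sumn_cat -[X in X < _]addn0 ltn_add2l.
apply: sumn_take_gt0; last by rewrite size_drop; lia.
by apply/allP => x /mem_drop; apply/allP.
Qed.

Lemma size_residues P p n : size (residues P p n) = (size P).+1.
Proof. by rewrite size_map size_iota. Qed.

Lemma residues0 P p n : 0 \in residues P p n.
Proof. by apply/mapP; exists 0; rewrite ?mem_iota // take0 mod0n. Qed.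

Lemma residues_ltn P p n r : 0 < n -> r \in residues P p n -> r < n.
Proof. by move=> n_gt0 /mapP[l _ ->]; exact: ltn_pmod. Qed.

Lemma uniq_residues P p n : coprime p n -> all (fun x => 0 < x) P -> sumn P < n ->
  uniq (residues P p n).
Proof.
move=> coprime_pn P_gt0 sum_lt; rewrite map_inj_in_uniq ?iota_uniq // => a b.
rewrite !mem_iota !add0n ltnS => /andP[_ a_le] /andP[_ b_le].
have sums_lt l : sumn (take l P) < n by exact: leq_ltn_trans (sumn_take_leq _ _) sum_lt.
move/(mulnr_mod_inj coprime_pn (sums_lt a) (sums_lt b)) => eq_sums.
case: (ltngtP a b) => // [lt_ab|lt_ba].
- by have := @sumn_take_ltn P a b P_gt0; rewrite eq_sums ltnn lt_ab => /(_ b_le).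
- by have := @sumn_take_ltn P b a P_gt0; rewrite eq_sums ltnn lt_ba => /(_ a_le).
Qed.

Section MechanicalWords.

Variables p q : nat.
Hypothesis p_gt0 : 0 < p.
Local Notation n := (p + q).

Definition mech y j : bool := p <= (y + j * q) %% n.

Definition mech_word y L : word := mkseq (mech y) L.

Lemma divnD_slope a : (a + q) %/ n = a %/ n + (p <= a %% n).
Proof.
have q_lt : q < n by lia.
rewrite divnD ?(divn_small q_lt) ?(modn_small q_lt) ?addn0; last lia.
by congr (_ + nat_of_bool _); apply/idP/idP; lia.
Qed.

Lemma mech_shift y r j : mech y (r + j) = mech (y + r * q) j.
Proof. by rewrite /mech mulnDl addnA. Qed.

Lemma mech_modl y j : mech (y %% n) j = mech y j.
Proof. by rewrite /mech modnDml. Qed.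

Lemma mech_modr y j : mech y (j %% n) = mech y j.
Proof. by rewrite /mech -modnDmr modnMml modnDmr. Qed.

Lemma size_mech_word y L : size (mech_word y L) = L.
Proof. exact: size_mkseq. Qed.

Lemma mech_word_cat y a b : mech_word y (a + b) = mech_word y a ++ mech_word (y + a * q) b.
Proof. by rewrite /mech_word mkseqD; congr (_ ++ _); apply: eq_mkseq => j; rewrite mech_shift. Qed.

Lemma mech_word_cons y L : mech_word y L.+1 = mech y 0 :: mech_word (y + q) L.
Proof. by rewrite -add1n mech_word_cat mul1n. Qed.

Lemma mech_word_modl y L : mech_word (y %% n) L = mech_word y L.
Proof. by apply: eq_mkseq => j; rewrite mech_modl. Qed.

Lemma take_mech_word y s L : s <= L -> take s (mech_word y L) = mech_word y s.
Proof. by move=> sL; rewrite -(subnKC sL) mech_word_cat take_size_cat ?size_mech_word. Qed.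

Lemma count_mech_word y L : count id (mech_word y L) = (y + L * q) %/ n - y %/ n.
Proof.
elim: L => [|L IH]; first by rewrite addn0 subnn.
rewrite -addn1 mech_word_cat count_cat IH /= /mech mul0n !addn0.
rewrite mulnDl mul1n addnA divnD_slope.
have : y %/ n <= (y + L * q) %/ n by apply/leq_div2r/leq_addr.
lia.
Qed.

Lemma cnt_b_mech_word y s : y < n -> cnt_b (mech_word y s) = (y + s * q) %/ n.
Proof. by move=> y_lt; rewrite /cnt_b count_mech_word (divn_small y_lt) subn0. Qed.

Lemma nth_mech_word y L j : j < L -> nth false (mech_word y L) j = mech y j.
Proof. exact: nth_mkseq. Qed.

Lemma rot_mech_word y r : r <= n -> rot r (mech_word y n) = mech_word (y + r * q) n.
Proof.
move=> r_le; apply: (@eq_from_nth _ false); first by rewrite size_rot !size_mech_word.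
rewrite size_rot size_mech_word => j j_lt.
rewrite nth_rot_mod ?size_mech_word // !nth_mech_word ?ltn_pmod //; last lia.
by rewrite mech_modr mech_shift.
Qed.

Lemma cnt_a_mech_word y : cnt_a (mech_word y n) = p.
Proof.
have := count_predC id (mech_word y n).
rewrite count_mech_word size_mech_word mulnC divnDMl ?addKn; last lia.
by rewrite /cnt_a -[count negb _]/(count (predC id) _); lia.
Qed.

Lemma lower_christoffel_mech_word : 0 < q -> lower_christoffel p q = mech_word 0 n.
Proof.
move=> q_gt0; rewrite /lower_christoffel /mech_word; apply: eq_mkseq => i /=.
rewrite /mech add0n mulSn [q + _]addnC -modnDml.
have a_lt : (i * q) %% n < n by apply: ltn_pmod; lia.
move: ((i * q) %% n) a_lt => a a_lt.
case: (ltnP a p) => a_p.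
  by rewrite modn_small; [apply/negbF; lia | lia].
have -> : a + q = n + (a - p) by lia.
by rewrite modnDl modn_small; [apply/negP; lia | lia].
Qed.

Lemma mech_rev j : j < n -> mech 0 (n - j.+1) = mech n.-1 j.
Proof.
(* With z = (j + 1) q mod n, both sides say 0 < z <= q. *)
move=> j_lt; rewrite /mech add0n; have n_gt0 : 0 < n by lia.
set z := (j.+1 * q) %% n; have z_lt : z < n by exact: ltn_pmod.
set y := ((n - j.+1) * q) %% n; have y_lt : y < n by exact: ltn_pmod.
set x := (n.-1 + j * q) %% n; have x_lt : x < n by exact: ltn_pmod.
have y_z : y + z = 0 %[mod n].
  rewrite /y /z modnDml modnDmr -mulnDl subnK //.
  by rewrite modnMr mod0n.
have x_z : x + (q + 1) = z %[mod n].
  rewrite /x /z modnDml.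
  have -> : n.-1 + j * q + (q + 1) = n + j.+1 * q by rewrite mulSn; lia.
  by rewrite modnDl modn_mod.
clearbody x y z.
have [yz|yz] := eq_modn_lt2 y_z ltac:(lia) n_gt0;
have [xz|xz] := eq_modn_lt2 x_z ltac:(lia) z_lt.
all: apply/idP/idP; lia.
Qed.

Lemma rev_mech_word : rev (mech_word 0 n) = mech_word n.-1 n.
Proof.
apply: (@eq_from_nth _ false); first by rewrite size_rev !size_mech_word.
rewrite size_rev size_mech_word => j j_lt.
by rewrite nth_rev ?size_mech_word // !nth_mech_word ?mech_rev //; lia.
Qed.

Lemma lexle_mech_word y y' L : y <= y' -> y %/ n = y' %/ n ->
  lexle (mech_word y L) (mech_word y' L).
Proof.
elim: L y y' => [|L IH] y y' le_yy' eq_div //.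
rewrite !mech_word_cons /= /mech !mul0n !addn0.
have le_mod : y %% n <= y' %% n.
  have := divn_eq y n; have := divn_eq y' n; rewrite -eq_div.
  by move: (y %/ n * n) => t; lia.
case: (boolP (p <= y %% n)) => hy; case: (boolP (p <= y' %% n)) => hy' //=.
- by apply: IH; [lia | rewrite !divnD_slope eq_div hy hy'].
- by move: hy'; rewrite -ltnNge; lia.
- by apply: IH; [lia | rewrite !divnD_slope eq_div (negbTE hy) (negbTE hy')].
Qed.

Lemma height_profile_mech_word P y : y < n ->
  height_profile P (mech_word y (sumn P)) =
  [seq (y + sumn (take l.+1 P) * q) %/ n - (y + sumn (take l P) * q) %/ n
     | l <- iota 0 (size P)].
Proof.
move=> y_lt; rewrite height_profile_prefix; apply: eq_map => l.
by rewrite !take_mech_word ?sumn_take_leq // !cnt_b_mech_word.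
Qed.

Section Coprime.

Hypothesis coprime_qn : coprime q n.

Lemma modn_slope_sum s : 0 < s < n -> (s * p) %% n + (s * q) %% n = n.
Proof.
move=> s_bounds; have n_gt0 : 0 < n by lia.
have sq_mod_gt0 : 0 < (s * q) %% n.
  rewrite lt0n; apply/negP => /eqP sq_mod0.
  have : n %| s * q by rewrite /dvdn sq_mod0.
  by rewrite Gauss_dvdl 1?coprime_sym // => /(dvdn_leq _); lia.
have := modnD (s * p) (s * q) n_gt0; rewrite -mulnDr modnMl.
have := ltn_pmod (s * p) n_gt0; have := ltn_pmod (s * q) n_gt0.
by case: leqP; lia.
Qed.

Lemma divn_mech_threshold y s : y < n -> 0 < s < n ->
  (y + s * q) %/ n = (s * q) %/ n + ((s * p) %% n <= y).
Proof.
move=> y_lt s_bounds; have := modn_slope_sum s_bounds.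
rewrite addnC divnD ?(divn_small y_lt) ?(modn_small y_lt) ?addn0; last lia.
by move=> sum_n; congr (_ + nat_of_bool _); apply/idP/idP; lia.
Qed.

Lemma height_profile_mech_word_eq P y y' :
  all (fun x => 0 < x) P -> sumn P < n -> y < n -> y' < n ->
  (height_profile P (mech_word y (sumn P)) == height_profile P (mech_word y' (sumn P)))
    = all (fun r => (r <= y) == (r <= y')) (residues P p n).
Proof.
move=> P_gt0 sum_lt y_lt y'_lt.
have mono z l : (z + sumn (take l P) * q) %/ n <= (z + sumn (take l.+1 P) * q) %/ n.
  by apply/leq_div2r; rewrite leq_add2l leq_mul2r leq_sumn_take ?orbT.
rewrite !height_profile_mech_word //.
rewrite (eq_map_diffs (a := fun l => (y + sumn (take l P) * q) %/ n)
                      (b := fun l => (y' + sumn (take l P) * q) %/ n)) //; last first.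
  by rewrite take0 /= mul0n !addn0 !divn_small.
rewrite /residues all_map; apply: eq_in_all => l.
rewrite mem_iota add0n ltnS => /andP[_ l_le] /=.
case: l l_le => [|l] l_le; first by rewrite take0 /= !mul0n !addn0 mod0n !divn_small.
have s_bounds : 0 < sumn (take l.+1 P) < n.
  by rewrite sumn_take_gt0 ?l_le //= (leq_ltn_trans (sumn_take_leq _ _) sum_lt).
rewrite !divn_mech_threshold // eqn_add2l.
by case: (_ <= y); case: (_ <= y').
Qed.

Lemma circ_factors_mech_word y m : m <= n ->
  perm_eq (circ_factors (mech_word y n) m) [seq mech_word z m | z <- iota 0 n].
Proof.
move=> m_le; rewrite /circ_factors size_mech_word.
have -> : [seq take m (rot i (mech_word y n)) | i <- iota 0 n]
          = [seq mech_word z m | z <- [seq (y + i * q) %% n | i <- iota 0 n]].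
  rewrite -map_comp; apply/eq_in_map => i; rewrite mem_iota add0n => /andP[_ i_lt] /=.
  by rewrite rot_mech_word ?take_mech_word ?mech_word_modl // ltnW.
exact/perm_map/perm_iota_affine_mod.
Qed.

End Coprime.

End MechanicalWords.

Lemma christoffel_conjugate_mech_word w c : christoffel c -> conjugate w c ->
  exists p q y, [/\ 0 < p, 0 < q, coprime p q & w = mech_word p q y (p + q)].
Proof.
move=> [p [q [p_gt0 q_gt0 cop c_eq]]] [r ->]; exists p, q.
have [y ->] : exists y, c = mech_word p q y (p + q).
  case: c_eq => ->; rewrite lower_christoffel_mech_word //.
    by exists 0.
  by exists (p + q).-1; rewrite rev_mech_word.
case: (leqP r (p + q)) => r_le.
  by exists (y + r * q); rewrite rot_mech_word.
by exists y; rewrite rot_oversize // size_mech_word ltnW.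
Qed.

Lemma bracket_index (g : nat -> nat) y N : g 0 <= y -> y < g N ->
  exists2 l, l < N & g l <= y < g l.+1.
Proof.
elim: N => [|N IH] g0_le y_lt; first lia.
case: (leqP (g N) y) => gN_le; first by exists N => //; apply/andP.
by have [l l_lt l_br] := IH g0_le gN_le; exists l => //; lia.
Qed.

Lemma count_iota_bracket a b n : a <= b <= n ->
  count (fun y => a <= y < b) (iota 0 n) = b - a.
Proof.
move=> /andP[ab bn]; have -> : n = a + ((b - a) + (n - b)) by lia.
rewrite !iotaD !count_cat !add0n.
rewrite (@eq_in_count _ _ pred0 (iota 0 a)); last first.
  by move=> y; rewrite mem_iota => /andP[_ ?] /=; apply/negP => /andP[]; lia.
rewrite (@eq_in_count _ _ predT (iota a (b - a))); last first.
  by move=> y; rewrite mem_iota => /andP[? ?] /=; apply/andP; split; lia.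
rewrite (@eq_in_count _ _ pred0 (iota (a + (b - a)) (n - b))); last first.
  by move=> y; rewrite mem_iota => /andP[? _] /=; apply/negP => /andP[]; lia.
by rewrite !count_pred0 count_predT size_iota add0n addn0.
Qed.

Section Breakpoints.

Variables (n : nat) (res : seq nat).
Hypotheses (res_uniq : uniq res) (res0 : 0 \in res) (res_ltn : forall r, r \in res -> r < n).

Definition breakpoint l := nth 0 (rcons (sort leq res) n) l.

Local Notation R := (sort leq res).

Lemma breakpoint_sort l : l < size res -> breakpoint l = nth 0 R l.
Proof. by move=> l_lt; rewrite /breakpoint nth_rcons size_sort l_lt. Qed.

Lemma breakpoint_size : breakpoint (size res) = n.
Proof. by rewrite /breakpoint nth_rcons size_sort ltnn eqxx. Qed.

Lemma breakpoint0 : breakpoint 0 = 0.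
Proof.
have res_gt0 : 0 < size res by case: res res0.
rewrite breakpoint_sort //.
have := sort_sorted leq_total res; have : 0 \in R by rewrite mem_sort.
case: R => [|x s] //= /predU1P[<-|zs] // sorted_xs.
by have /allP /(_ 0 zs) := order_path_min leq_trans sorted_xs; rewrite leqn0 => /eqP.
Qed.

Lemma breakpoint_in l : l < size res -> breakpoint l \in res.
Proof. by move=> l_lt; rewrite breakpoint_sort // -(mem_sort leq) mem_nth ?size_sort. Qed.

Lemma breakpoint_ltn i j : i < j <= size res -> breakpoint i < breakpoint j.
Proof.
move=> /andP[ij j_le]; have i_lt : i < size res by exact: leq_trans ij j_le.
case: (ltnP j (size res)) => [j_lt|j_ge].
  have sorted_R : sorted ltn R.
    by rewrite ltn_sorted_uniq_leq sort_uniq res_uniq (sort_sorted leq_total).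
  rewrite !breakpoint_sort //.
  by apply: (sorted_ltn_nth ltn_trans 0 sorted_R) => //; rewrite inE size_sort.
have -> : j = size res by lia.
by rewrite breakpoint_size; apply/res_ltn/breakpoint_in.
Qed.

Lemma breakpoint_ltn_n l : l < size res -> breakpoint l < n.
Proof. by move=> l_lt; rewrite -breakpoint_size breakpoint_ltn // l_lt leqnn. Qed.

Lemma breakpoint_leq i j : i <= j <= size res -> breakpoint i <= breakpoint j.
Proof.
case/andP; rewrite leq_eqVlt => /predU1P[->|ij] j_le //.
by apply/ltnW/breakpoint_ltn; rewrite ij.
Qed.

Lemma mem_res_breakpoint r : r \in res -> exists2 i, i < size res & r = breakpoint i.
Proof.
rewrite -(mem_sort leq) => r_in; exists (index r R); first by rewrite -(size_sort leq) index_mem.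
by rewrite breakpoint_sort ?nth_index // -(size_sort leq) index_mem.
Qed.

Lemma breakpoint_bracket_uniq i j : i < size res -> j < size res ->
  breakpoint j <= breakpoint i < breakpoint j.+1 -> i = j.
Proof.
move=> i_lt j_lt /andP[ji ij]; case: (ltngtP i j) => // [lt_ij|lt_ji].
  have : breakpoint i < breakpoint j by apply: breakpoint_ltn; rewrite lt_ij ltnW.
  lia.
have : breakpoint j.+1 <= breakpoint i by apply: breakpoint_leq; rewrite lt_ji ltnW.
lia.
Qed.

Lemma all_side_breakpoint l y : l < size res -> y < n ->
  all (fun r => (r <= y) == (r <= breakpoint l)) res = (breakpoint l <= y < breakpoint l.+1).
Proof.
move=> l_lt y_lt; apply/allP/idP => [same_side | /andP[le_y y_lt_next] r].
  have := same_side _ (breakpoint_in l_lt); rewrite leqnn eqb_id => ->.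
  case: (ltnP l.+1 (size res)) => [l1_lt|l1_ge].
    2: by rewrite (_ : l.+1 = size res) ?breakpoint_size; lia.
  have bp_lt : breakpoint l < breakpoint l.+1 by apply: breakpoint_ltn; rewrite leqnn ltnW.
  have := same_side _ (breakpoint_in l1_lt).
  by rewrite [_ <= breakpoint l]leqNgt bp_lt eqbF_neg -ltnNge.
case/mem_res_breakpoint => i i_lt ->; case: (leqP i l) => [il|li].
  have le_il : breakpoint i <= breakpoint l by apply: breakpoint_leq; rewrite il ltnW.
  by rewrite le_il (leq_trans le_il le_y).
have le_li : breakpoint l.+1 <= breakpoint i by apply: breakpoint_leq; rewrite li ltnW.
by apply/eqP; lia.
Qed.

Section Varieties.

Variables (w : word) (P : seq nat) (f : nat -> word).
Hypothesis circ_factors_perm : perm_eq (circ_factors w (sumn P)) [seq f y | y <- iota 0 n].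
Hypothesis height_profile_eq : forall y y', y < n -> y' < n ->
  (height_profile P (f y) == height_profile P (f y')) = all (fun r => (r <= y) == (r <= y')) res.
Hypothesis f_mono : forall y y', y <= y' < n -> lexle (f y) (f y').

Local Notation hp y := (height_profile P (f y)).
Local Notation bp := breakpoint.

Lemma height_profile_breakpoint l y : l < size res -> y < n ->
  (hp y == hp (bp l)) = (bp l <= y < bp l.+1).
Proof.
by move=> l_lt y_lt; rewrite height_profile_eq ?breakpoint_ltn_n ?all_side_breakpoint.
Qed.

Lemma multiplicity_breakpoint l : l < size res ->
  multiplicity w P (hp (bp l)) = bp l.+1 - bp l.
Proof.
move=> l_lt; rewrite /multiplicity /variety_elems size_filter (permP circ_factors_perm) count_map.
rewrite (@eq_in_count _ _ (fun y => bp l <= y < bp l.+1)); last first.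
  by move=> y; rewrite mem_iota => /andP[_ y_lt]; apply: height_profile_breakpoint.
rewrite count_iota_bracket // -[n]breakpoint_size !breakpoint_leq //; lia.
Qed.

Lemma least_elem_breakpoint l : l < size res -> least_elem w P (hp (bp l)) = f (bp l).
Proof.
move=> l_lt; apply: head_sort_lexle => [|u].
  rewrite mem_filter eqxx (perm_mem circ_factors_perm).
  by apply: map_f; rewrite mem_iota breakpoint_ltn_n.
rewrite mem_filter (perm_mem circ_factors_perm) => /andP[hp_u /mapP[y]].
rewrite mem_iota => /andP[_ y_lt] u_eq; move: hp_u; rewrite u_eq height_profile_breakpoint //.
by case/andP=> le_y _; apply: f_mono; rewrite le_y.
Qed.

Lemma perm_varieties :
  perm_eq (varieties w P) [seq hp (bp l) | l <- iota 0 (size res)].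
Proof.
apply: uniq_perm; first exact: undup_uniq.
  rewrite map_inj_in_uniq ?iota_uniq // => i j; rewrite !mem_iota => /andP[_ i_lt] /andP[_ j_lt].
  move/eqP; rewrite height_profile_breakpoint ?breakpoint_ltn_n //.
  exact: breakpoint_bracket_uniq.
move=> h; rewrite mem_undup (perm_mem (perm_map _ circ_factors_perm)) -map_comp.
apply/mapP/mapP => -[x]; rewrite mem_iota => /andP[_ x_lt] ->.
  have bp0_le : bp 0 <= x by rewrite breakpoint0.
  have x_lt_bp : x < bp (size res) by rewrite breakpoint_size.
  have [l l_lt /andP[le_x x_lt_next]] := bracket_index bp0_le x_lt_bp.
  exists l; first by rewrite mem_iota.
  by apply/eqP; rewrite height_profile_breakpoint // le_x.
by exists (bp x); rewrite // mem_iota breakpoint_ltn_n.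
Qed.

Lemma ordered_varietiesE :
  ordered_varieties w P = [seq hp (bp l) | l <- iota 0 (size res)].
Proof.
symmetry; apply: (@sorted_eq_in _ (fun h1 h2 => lexle (least_elem w P h1) (least_elem w P h2))).
- by move=> ? ? ? _ _ _; exact: lexle_trans.
- move=> h1 h2 /mapP[i]; rewrite mem_iota => /andP[_ i_lt] -> /mapP[j].
  rewrite mem_iota => /andP[_ j_lt] ->; rewrite !least_elem_breakpoint //.
  by move/lexle_antisym => eq_f; rewrite eq_f.
- rewrite sorted_map; apply: (@sub_in_sorted _ _ leq) (allss _) (iota_sorted 0 _).
  move=> i j; rewrite !mem_iota => /andP[_ i_lt] /andP[_ j_lt] ij.
  change (lexle (least_elem w P (hp (bp i))) (least_elem w P (hp (bp j)))).
  rewrite !least_elem_breakpoint //; apply: f_mono.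
  apply/andP; split; last exact: breakpoint_ltn_n.
  by apply: breakpoint_leq; rewrite ij ltnW.
- by apply: sort_sorted => ? ?; exact: lexle_total.
- by rewrite perm_sym perm_sort perm_varieties.
Qed.

Lemma multiplicities_ordered_varieties :
  [seq multiplicity w P h | h <- ordered_varieties w P]
    = [seq bp l.+1 - bp l | l <- iota 0 (size res)].
Proof.
rewrite ordered_varietiesE -map_comp; apply/eq_in_map => l.
by rewrite mem_iota => /andP[_ l_lt]; exact: multiplicity_breakpoint.
Qed.

End Varieties.

End Breakpoints.

Theorem mainTheorem3 (w : word) (c : word) (k m : nat) (P : seq nat) :
  christoffel c -> conjugate w c -> 1 < size w ->
  1 <= k -> k <= m -> m < size w ->
  ordered_partition P m k ->
  uniq (residues P (cnt_a w) (size w)) /\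
  [seq multiplicity w P h | h <- ordered_varieties w P]
    = Pi_partition P (cnt_a w) (size w).
Proof.
move=> c_christoffel w_conj _ _ _ m_lt /and3P[_ P_gt0 /eqP sum_P]; subst m.
have [p [q [y [p_gt0 q_gt0 coprime_pq w_eq]]]] :=
  christoffel_conjugate_mech_word c_christoffel w_conj.
subst w.
rewrite size_mech_word cnt_a_mech_word // in m_lt *.
have coprime_qn : coprime q (p + q) by rewrite -coprime_modr modnDr coprime_modr coprime_sym.
have coprime_pn : coprime p (p + q) by rewrite -coprime_modr modnDl coprime_modr.
have res_uniq := uniq_residues coprime_pn P_gt0 m_lt.
split => //.
rewrite (multiplicities_ordered_varieties res_uniq (residues0 P p (p + q)) _
           (circ_factors_mech_word p_gt0 coprime_qn y (ltnW m_lt))).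
- by rewrite size_residues.
- by move=> r; apply: residues_ltn; lia.
- by move=> z z' z_lt z'_lt; apply: height_profile_mech_word_eq.
- by move=> z z' /andP[le_zz' z'_lt]; apply: lexle_mech_word; rewrite ?divn_small //; lia.
Qed.
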